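(* Let $A$ and $B$ be self-adjoint operators on the same complex Hilbert space, with $B$ bounded and non-negative. If $B \neq 0$, then $\bigcup_{t\in\mathbb{R}} \sigma(A+tB)$ is a dense subset of $\mathbb{R}$.
   Context: $\sigma(T)$ denotes the spectrum of an operator $T$. $A$ may be unbounded; $A+tB$ is defined on the domain of $A$. *)

From HB Require Import structures.
From mathcomp Require Import all_boot all_order all_algebra.
From mathcomp Require Import complex reals.
Set Implicit Arguments. Unset Strict Implicit. Unset Printing Implicit Defensive.
Import Order.TTheory GRing.Theory Num.Theory.
Local Open Scope ring_scope.
Local Open Scope complex_scope.

Section Hilbert.
Variables (R : realType) (H : lmodType R[i]) (ip : H -> H -> R[i]).

Definition hnorm (x : H) : R := Num.sqrt (complex.Re (ip x x)).

Definition is_hilbert : Prop :=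
  [/\ (forall (a : R[i]) x y z, ip (a *: x + y) z = a * ip x z + ip y z),
      (forall x y, ip y x = (ip x y)^*),
      (forall x, 0 <= ip x x),
      (forall x, ip x x = 0 -> x = 0) &
      (forall u : nat -> H,
         (forall e : R, 0 < e -> exists N, forall m n, (N <= m)%N -> (N <= n)%N ->
             hnorm (u m - u n) < e) ->
         exists l : H, forall e : R, 0 < e -> exists N, forall n, (N <= n)%N ->
             hnorm (u n - l) < e)].

(* A (possibly unbounded) operator is a map T : H -> H together with a domain
   D : H -> Prop; values of T outside D are irrelevant. *)
Definition linear_on (D : H -> Prop) (T : H -> H) : Prop :=
  [/\ D 0,
      (forall (a : R[i]) x y, D x -> D y -> D (a *: x + y)) &
      (forall (a : R[i]) x y, D x -> D y -> T (a *: x + y) = a *: T x + T y)].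

Definition dense (D : H -> Prop) : Prop :=
  forall x (e : R), 0 < e -> exists y, D y /\ hnorm (x - y) < e.

Definition adjoint_dom (D : H -> Prop) (T : H -> H) (y : H) : Prop :=
  exists z : H, forall x, D x -> ip (T x) y = ip x z.

(* T with domain D is self-adjoint: densely defined, T^* = T with D(T^* ) = D.
   (For y in D, T^* y = T y is the symmetry condition, the adjoint being
   well defined since D is dense.) *)
Definition self_adjoint (D : H -> Prop) (T : H -> H) : Prop :=
  [/\ linear_on D T, dense D,
      (forall x y, D x -> D y -> ip (T x) y = ip x (T y)) &
      (forall y, adjoint_dom D T y -> D y)].

Definition bounded_op (T : H -> H) : Prop :=
  linear_on (fun _ => True) T /\
  exists C : R, forall x, hnorm (T x) <= C * hnorm x.

Definition resolvent (D : H -> Prop) (T : H -> H) (lam : R[i]) : Prop :=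
  exists S : H -> H, [/\ bounded_op S,
    (forall y, D (S y) /\ T (S y) - lam *: S y = y) &
    (forall x, D x -> S (T x - lam *: x) = x)].

Definition spectrum (D : H -> Prop) (T : H -> H) (lam : R[i]) : Prop :=
  ~ resolvent D T lam.

End Hilbert.

(* For real t the operator A + tB is self-adjoint, so its spectrum is real:
   for non-real z, A + tB - z is bounded below by |Im z|, hence injective with
   closed range, and a vector orthogonal to that range lies in the domain of
   the adjoint and must vanish; the projection theorem makes A + tB - z onto.

   For density, suppose no spectrum meets (x - e, x + e). Then every
   R_t = (A + tB - x)^-1 exists and has norm at most 1/e, because if a
   symmetric resolvent R has norm s then R - s or R + s fails to be bounded
   below, i.e. x + 1/s or x - 1/s is spectral. Pick u in D(A) with
   <Bu, u> > 0 (possible as B >= 0, B <> 0 and D(A) is dense) and put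
   g t = <R_t Bu, Bu>. The resolvent identity R_a - R_b = (b - a) R_a B R_b
   and B >= 0 make g nonincreasing, while t R_t Bu = u - R_t (A - x) u gives
   t g t -> <Bu, u> > 0 as t -> +oo and as t -> -oo. So g is positive far
   to the right and negative far to the left, a contradiction. *)

From HB Require Import structures.
From mathcomp Require Import all_boot all_order all_algebra.
From mathcomp Require Import complex classical_sets boolp reals ring lra.
Set Implicit Arguments. Unset Strict Implicit. Unset Printing Implicit Defensive.
Import Order.TTheory GRing.Theory Num.Theory.
Local Open Scope ring_scope.
Local Open Scope complex_scope.

Section RealComplex.
Variable R : realType.
Implicit Types (r : R) (a b : R[i]).

Lemma Re_realM r a : complex.Re (r%:C * a) = r * complex.Re a.
Proof. by case: a => x y /=; ring. Qed.

Lemma Re_iM a : complex.Re ('i * a) = - complex.Im a.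
Proof. by case: a => x y /=; ring. Qed.

Lemma complex_eq_ReIm a b :
  complex.Re a = complex.Re b -> complex.Im a = complex.Im b -> a = b.
Proof. by case: a => ? ?; case: b => ? ? /= -> ->. Qed.

Lemma complex_eq_Re_iM a b :
  complex.Re a = complex.Re b -> complex.Re ('i * a) = complex.Re ('i * b) -> a = b.
Proof. by rewrite !Re_iM => eRe /eqP; rewrite eqr_opp => /eqP; apply: complex_eq_ReIm. Qed.

End RealComplex.

Section RealFacts.
Variable R : realType.

Lemma invS_lt (e : R) : 0 < e -> exists N, forall n, (N <= n)%N -> n.+1%:R^-1 < e.
Proof.
move=> e0; have [N hN] := ltr_add_invr e0; exists N => n Nn.
rewrite add0r in hN; apply: le_lt_trans hN.
by rewrite lef_pV2 ?posrE // ler_nat.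
Qed.

Lemma invS_le1 n : n.+1%:R^-1 <= 1 :> R.
Proof. by rewrite invf_le1 ?ltr0Sn // ler1n. Qed.

Lemma lin_le_quad_eq0 (A r : R) : 0 <= A -> (forall s, 2 * s * r <= s ^+ 2 * A) -> r = 0.
Proof.
move=> A0 h; have A1 : 0 < A + 1 by lra.
have := h (r / (A + 1)); rewrite -subr_ge0.
have -> : (r / (A + 1)) ^+ 2 * A - 2 * (r / (A + 1)) * r
        = - (r ^+ 2 * (A + 2) / (A + 1) ^+ 2) by field; lra.
rewrite oppr_ge0 pmulr_lle0 ?invr_gt0 ?exprn_gt0 // pmulr_lle0; last by lra.
by move=> r2; apply/eqP; rewrite -sqrf_eq0 eq_le r2 sqr_ge0.
Qed.

Lemma nonincreasing_of_sqr_step (f : R -> R) (L : R) :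
  (forall a b, a <= b -> f b <= f a + L * (b - a) ^+ 2) ->
  forall a b, a <= b -> f b <= f a.
Proof.
move=> step a b ab; apply/ler_addgt0Pr => e e_gt0.
have iter n h : 0 <= h -> f (a + n%:R * h) <= f a + `|L| * n%:R * h ^+ 2.
  move=> h_ge0; elim: n => [|n IH]; first by rewrite !(mul0r, mulr0) !addr0.
  have le_h : a + n%:R * h <= a + n.+1%:R * h by rewrite lerD2l ler_wpM2r // ler_nat.
  have := step _ _ le_h; have -> : a + n.+1%:R * h - (a + n%:R * h) = h by rewrite -natr1; ring.
  move=> /le_trans; apply; rewrite -natr1 [_ * (_ + 1)]mulrDr mulr1 mulrDl addrA.
  by rewrite lerD // ler_wpM2r ?sqr_ge0 ?ler_norm.
pose X := `|L| * (b - a) ^+ 2.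
have X_ge0 : 0 <= X by rewrite mulr_ge0 ?sqr_ge0.
have X1 : 0 < X + 1 by rewrite ltr_wpDl.
have [N hN] := invS_lt (divr_gt0 e_gt0 X1).
have := iter N.+1 ((b - a) / N.+1%:R); rewrite divr_ge0 ?subr_ge0 // => /(_ isT).
rewrite mulrC divfK ?pnatr_eq0 // addrC subrK => /le_trans; apply; rewrite lerD2l.
have -> : `|L| * N.+1%:R * ((b - a) / N.+1%:R) ^+ 2 = X * N.+1%:R^-1.
  by rewrite /X; field; rewrite addrC natr1 pnatr_eq0.
apply: (le_trans (y := X * (e / (X + 1)))).
  by rewrite ler_wpM2l // ltW // hN.
by rewrite mulrA ler_pdivrMr // mulrDr mulr1 mulrC lerDl ltW.
Qed.

Lemma nonincreasing_asymptotic_le0 (f : R -> R) (beta M : R) :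
  (forall a b, a <= b -> f b <= f a) ->
  (forall t, `|t| * `|t * f t - beta| <= M) -> beta <= 0.
Proof.
move=> f_noninc near_beta; rewrite leNgt; apply/negP => beta_gt0.
have M_ge0 : 0 <= M by apply: le_trans (near_beta 0); rewrite normr0 mul0r.
(* once [|t| beta > 2 M], [t f t] is within [beta / 2] of [beta] *)
have far t : 2 * M < `|t| * beta -> 0 < t * f t.
  move=> far_t; have t_gt0 : 0 < `|t|.
    by rewrite -(pmulr_lgt0 _ beta_gt0); apply: le_lt_trans far_t; rewrite mulr_ge0.
  have : `|t| * `|t * f t - beta| < `|t| * (beta / 2).
    by apply: le_lt_trans (near_beta t) _; rewrite mulrA; lra.
  rewrite ltr_pM2l // => /ltr_distlCBl; lra.
pose t0 := 2 * M / beta + 1.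
have t0_gt0 : 0 < t0 by rewrite ltr_wpDl // divr_ge0 ?mulr_ge0 // ltW.
have t0_far : 2 * M < `|t0| * beta.
  by rewrite gtr0_norm // [t0 * beta]mulrDl divfK ?gt_eqF // mul1r ltrDl.
have := far t0 t0_far; have := far (- t0); rewrite normrN => /(_ t0_far).
rewrite mulNr oppr_gt0 !pmulr_rgt0 // pmulr_rlt0 //.
have le_t0 : - t0 <= t0 by lra.
have := f_noninc _ _ le_t0; lra.
Qed.

End RealFacts.

Section Hilbert.
Variables (R : realType) (H : lmodType R[i]) (ip : H -> H -> R[i]).
Hypothesis ipl : forall (a : R[i]) x y z, ip (a *: x + y) z = a * ip x z + ip y z.
Hypothesis ipC : forall x y, ip y x = (ip x y)^*.
Hypothesis ipge0 : forall x, 0 <= ip x x.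
Hypothesis ipdef : forall x, ip x x = 0 -> x = 0.

Local Notation sqn x := (complex.Re (ip x x)).
Local Notation "`| x |_H" := (hnorm ip x) (format "`| x |_H").

Lemma ipDl x y z : ip (x + y) z = ip x z + ip y z.
Proof. by have := ipl 1 x y z; rewrite scale1r mul1r. Qed.

Lemma ip0l z : ip 0 z = 0.
Proof. by apply/(addrI (ip 0 z)); rewrite -ipDl !addr0. Qed.

Lemma ipZl a x z : ip (a *: x) z = a * ip x z.
Proof. by have := ipl a x 0 z; rewrite !addr0 ip0l addr0. Qed.

Lemma ipNl x z : ip (- x) z = - ip x z.
Proof. by rewrite -scaleN1r ipZl mulN1r. Qed.

Lemma ipBl x y z : ip (x - y) z = ip x z - ip y z.
Proof. by rewrite ipDl ipNl. Qed.

Lemma ipDr x y z : ip z (x + y) = ip z x + ip z y.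
Proof. by rewrite !(ipC _ z) ipDl rmorphD. Qed.

Lemma ipZr a x z : ip z (a *: x) = a^* * ip z x.
Proof. by rewrite !(ipC _ z) ipZl rmorphM. Qed.

Lemma ipZr_real (r : R) x z : ip z (r%:C *: x) = r%:C * ip z x.
Proof. by rewrite ipZr; congr (_ * _); apply/eqP; rewrite eq_complex /= oppr0 !eqxx. Qed.

Lemma ip0r z : ip z 0 = 0.
Proof. by rewrite ipC ip0l conjc0. Qed.

Lemma ipNr x z : ip z (- x) = - ip z x.
Proof. by rewrite !(ipC _ z) ipNl rmorphN. Qed.

Lemma ipBr x y z : ip z (x - y) = ip z x - ip z y.
Proof. by rewrite ipDr ipNr. Qed.

Lemma Re_ipC x y : complex.Re (ip y x) = complex.Re (ip x y).
Proof. by rewrite ipC; case: (ip x y). Qed.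

Lemma ip_sym_Im x y : ip x y = ip y x -> complex.Im (ip x y) = 0.
Proof. by rewrite [ip y x]ipC; case: (ip x y) => a b /= [] => /eqP; lra. Qed.

Lemma sqn_ge0 x : 0 <= sqn x.
Proof. by have := ipge0 x; rewrite lecE => /andP[]. Qed.

Lemma ipxx x : ip x x = (sqn x)%:C.
Proof. by rewrite [LHS]complexE ger0_Im // mulr0 addr0. Qed.

Lemma sqn_eq0 x : sqn x = 0 -> x = 0.
Proof. by move=> h; apply: ipdef; rewrite ipxx h. Qed.

Lemma sqn0 : sqn 0 = 0.
Proof. by rewrite ip0l. Qed.

Lemma sqnD x y : sqn (x + y) = sqn x + sqn y + 2 * complex.Re (ip x y).
Proof. by rewrite ipDl !ipDr !raddfD /= (Re_ipC x y); ring. Qed.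

Lemma sqnB x y : sqn (x - y) = sqn x + sqn y - 2 * complex.Re (ip x y).
Proof. by rewrite ipBl !ipBr !raddfB /= (Re_ipC x y); ring. Qed.

Lemma sqnZ a x : sqn (a *: x) = (complex.Re a ^+ 2 + complex.Im a ^+ 2) * sqn x.
Proof. by rewrite ipZl ipZr ipxx; case: a => ? ? /=; ring. Qed.

Lemma sqnZr (r : R) x : sqn (r%:C *: x) = r ^+ 2 * sqn x.
Proof. by rewrite sqnZ /= expr0n addr0. Qed.

Lemma parallelogram x y : sqn (x + y) + sqn (x - y) = 2 * sqn x + 2 * sqn y.
Proof. by rewrite sqnD sqnB; ring. Qed.

Lemma Re_ip_sqr_le x y : complex.Re (ip x y) ^+ 2 <= sqn x * sqn y.
Proof.
have [y0|y_neq0] := eqVneq (sqn y) 0.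
  by rewrite (sqn_eq0 y0) ip0r sqn0 mulr0 expr0n.
pose s := complex.Re (ip x y) / sqn y.
have := sqn_ge0 (x - s%:C *: y).
(* [s] minimises [sqn (x - s y)] over real [s] *)
rewrite sqnB sqnZ ipZr /s; case: (ip x y) => a b /= h.
rewrite -subr_ge0; move: (mulr_ge0 (sqn_ge0 y) h); congr (0 <= _).
by field.
Qed.

Lemma Im_ip_sqr_le x y : complex.Im (ip x y) ^+ 2 <= sqn x * sqn y.
Proof.
have := Re_ip_sqr_le ('i *: x) y.
by rewrite ipZl Re_iM sqrrN sqnZ /=; lra.
Qed.

Lemma hnorm_ge0 x : 0 <= `|x|_H.
Proof. exact: sqrtr_ge0. Qed.

Lemma hnorm_sqr x : `|x|_H ^+ 2 = sqn x.
Proof. by rewrite sqr_sqrtr // sqn_ge0. Qed.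

Lemma hnorm0 : `|0|_H = 0.
Proof. by rewrite /hnorm sqn0 sqrtr0. Qed.

Lemma hnorm_eq0 x : `|x|_H = 0 -> x = 0.
Proof. by move=> h; apply: sqn_eq0; rewrite -hnorm_sqr h expr0n. Qed.

Lemma ler_hnorm_sqn x (e : R) : 0 <= e -> (`|x|_H <= e) = (sqn x <= e ^+ 2).
Proof. by move=> e0; rewrite -hnorm_sqr ler_pXn2r // nnegrE hnorm_ge0. Qed.

Lemma ltr_hnorm_sqn x (e : R) : 0 <= e -> (`|x|_H < e) = (sqn x < e ^+ 2).
Proof. by move=> e0; rewrite -hnorm_sqr ltr_pXn2r // nnegrE hnorm_ge0. Qed.

Lemma ger_hnorm_sqn x (e : R) : 0 <= e -> (e <= `|x|_H) = (e ^+ 2 <= sqn x).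
Proof. by move=> e0; rewrite -hnorm_sqr ler_pXn2r // nnegrE hnorm_ge0. Qed.

Lemma normr_le_of_sqr (r e : R) : 0 <= e -> r ^+ 2 <= e ^+ 2 -> `|r| <= e.
Proof. by move=> e0; rewrite -real_normK ?num_real // ler_pXn2r // nnegrE. Qed.

Lemma Re_ip_le x y : `|complex.Re (ip x y)| <= `|x|_H * `|y|_H.
Proof.
apply: normr_le_of_sqr; first by rewrite mulr_ge0 ?hnorm_ge0.
by rewrite exprMn !hnorm_sqr Re_ip_sqr_le.
Qed.

Lemma Im_ip_le x y : `|complex.Im (ip x y)| <= `|x|_H * `|y|_H.
Proof.
apply: normr_le_of_sqr; first by rewrite mulr_ge0 ?hnorm_ge0.
by rewrite exprMn !hnorm_sqr Im_ip_sqr_le.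
Qed.

Lemma hnormD x y : `|x + y|_H <= `|x|_H + `|y|_H.
Proof.
rewrite ler_hnorm_sqn ?addr_ge0 ?hnorm_ge0 // sqnD sqrrD !hnorm_sqr.
have := ler_norm (complex.Re (ip x y)); have := Re_ip_le x y; lra.
Qed.

Lemma hnormN x : `|- x|_H = `|x|_H.
Proof. by rewrite /hnorm ipNl ipNr opprK. Qed.

Lemma hnormZ a x :
  `|a *: x|_H = Num.sqrt (complex.Re a ^+ 2 + complex.Im a ^+ 2) * `|x|_H.
Proof. by rewrite /hnorm sqnZ sqrtrM // addr_ge0 ?sqr_ge0. Qed.

Lemma hnormZr (r : R) x : `|r%:C *: x|_H = `|r| * `|x|_H.
Proof. by rewrite /hnorm sqnZr sqrtrM ?sqr_ge0 // sqrtr_sqr. Qed.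

Lemma hnorm_distC x y : `|x - y|_H = `|y - x|_H.
Proof. by rewrite -hnormN opprB. Qed.

Lemma hnormB_le x y z : `|x - z|_H <= `|x - y|_H + `|y - z|_H.
Proof. by have := hnormD (x - y) (y - z); rewrite addrA subrK. Qed.


Definition hcauchy (u : nat -> H) := forall e : R, 0 < e ->
  exists N, forall m n, (N <= m)%N -> (N <= n)%N -> `|u m - u n|_H < e.

Definition hcvg (u : nat -> H) (l : H) := forall e : R, 0 < e ->
  exists N, forall n, (N <= n)%N -> `|u n - l|_H < e.

Hypothesis complete : forall u, hcauchy u -> exists l, hcvg u l.

Lemma hcauchy_of_sqn_le (u : nat -> H) (C : R) :
  (forall m n, sqn (u m - u n) <= C * (m.+1%:R^-1 + n.+1%:R^-1)) -> hcauchy u.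
Proof.
move=> hu e e0; have C1 : 0 < `|C| + 1 by rewrite ltr_wpDl.
have [N hN] := invS_lt (divr_gt0 (exprn_gt0 2 e0) (mulr_gt0 (ltr0Sn R 1) C1)).
exists N => m n Nm Nn; rewrite ltr_hnorm_sqn ?ltW //.
apply: le_lt_trans (hu m n) _; apply: le_lt_trans (ler_norm _) _.
rewrite normrM [`|_ + _|]ger0_norm ?addr_ge0 ?invr_ge0 ?ler0n //.
have := hN m Nm; have := hN n Nn; rewrite !ltr_pdivlMr ?mulr_gt0 //.
have : 0 <= m.+1%:R^-1 :> R by rewrite invr_ge0.
have : 0 <= n.+1%:R^-1 :> R by rewrite invr_ge0.
have := normr_ge0 C; move: (m.+1%:R^-1 : R) (n.+1%:R^-1 : R) `|C| (e ^+ 2) => a b c E; lra.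
Qed.

Lemma Re_ip_cvg (u : nat -> H) l a : hcvg u l ->
  forall e : R, 0 < e -> exists N, forall n, (N <= n)%N ->
    `|complex.Re (ip a (u n)) - complex.Re (ip a l)| < e.
Proof.
move=> ul e e0; have a1 : 0 < `|a|_H + 1 by rewrite ltr_wpDl ?hnorm_ge0.
have [N hN] := ul _ (divr_gt0 e0 a1); exists N => n /hN un.
rewrite -raddfB -ipBr; apply: le_lt_trans (Re_ip_le _ _) _.
rewrite ltr_pdivlMr // in un; apply: le_lt_trans un.
by rewrite mulrC ler_wpM2l ?hnorm_ge0 // lerDl.
Qed.

Lemma min_dist_orth v w : (forall a : R[i], `|v|_H <= `|v - a *: w|_H) -> ip w v = 0.
Proof.
move=> vmin.
have Re_eq0 u : (forall s : R, `|v|_H <= `|v - s%:C *: u|_H) -> complex.Re (ip v u) = 0.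
  move=> h; apply: (lin_le_quad_eq0 (sqn_ge0 u)) => s.
  have := h s; rewrite !ler_hnorm_sqn ?hnorm_ge0 // hnorm_sqr.
  by rewrite sqnB sqnZ ipZr; case: (ip v u) => a b /=; lra.
have hRe := Re_eq0 w (fun s => vmin s%:C).
have hIm : complex.Re (ip v ('i *: w)) = 0.
  by apply: Re_eq0 => s; rewrite scalerA; apply: vmin.
rewrite ipC; move: hRe hIm; rewrite ipZr.
by case: (ip v w) => a b /= hRe hIm; apply: complex_eq_ReIm => /=; lra.
Qed.

Section Projection.
Variable M : H -> Prop.
Hypothesis M0 : M 0.
Hypothesis M_lin : forall (a : R[i]) x y, M x -> M y -> M (a *: x + y).
Hypothesis M_closed : forall u l, (forall n, M (u n)) -> hcvg u l -> M l.

Let M_add x x' : M x -> M x' -> M (x + x').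
Proof. by move=> /(M_lin 1) Mx /Mx; rewrite scale1r. Qed.

Let M_scale a x : M x -> M (a *: x).
Proof. by move=> /(M_lin a)/(_ M0); rewrite addr0. Qed.

(* the parallelogram law applied to [y - ms n] and [y - ms k], whose midpoint lies in [M] *)
Lemma almost_nearest_cauchy y (d : R) (ms : nat -> H) : 0 <= d ->
  (forall m, M m -> d <= `|y - m|_H) ->
  (forall n, M (ms n) /\ `|y - ms n|_H < d + n.+1%:R^-1) -> hcauchy ms.
Proof.
move=> d_ge0 d_le ms_near; apply: (@hcauchy_of_sqn_le _ (2 * (2 * d + 1))) => n k.
have [[Mn dn] [Mk dk]] := (ms_near n, ms_near k).
have := d_le _ (M_scale (2^-1)%:C (M_add Mn Mk)); rewrite ger_hnorm_sqn // => le_mid.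
have := parallelogram (y - ms k) (y - ms n).
have -> : y - ms k + (y - ms n) = 2%:C *: (y - (2^-1)%:C *: (ms n + ms k)).
  rewrite scalerBr scalerA -rmorphM mulfV ?pnatr_eq0 // rmorph1 scale1r.
  by rewrite rmorph_nat scaler_nat mulr2n addrACA -opprD [ms k + _]addrC.
have -> : y - ms k - (y - ms n) = ms n - ms k by rewrite opprB addrC addrA subrK.
move: dn dk; rewrite !ltr_hnorm_sqn ?addr_ge0 ?invr_ge0 // sqnZr.
have := invS_le1 R n; have := invS_le1 R k.
have : 0 <= n.+1%:R^-1 :> R by rewrite invr_ge0.
have : 0 <= k.+1%:R^-1 :> R by rewrite invr_ge0.
move: (n.+1%:R^-1 : R) (k.+1%:R^-1 : R) => a b; nra.
Qed.

Lemma orthogonal_projection y : exists2 m, M m & forall m', M m' -> ip m' (y - m) = 0.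
Proof.
pose E := [set `|y - m|_H | m in M]%classic.
have E_inf : has_inf E.
  by split; [exists `|y - 0|_H, 0 | exists 0 => _ [m _ <-]; apply: hnorm_ge0].
pose d := inf E.
have d_le m : M m -> d <= `|y - m|_H by move=> Mm; apply: (ge_inf E_inf.2); exists m.
have d_ge0 : 0 <= d by apply: lb_le_inf E_inf.1 _ => _ [m _ <-]; apply: hnorm_ge0.
have /choice[ms ms_near] : forall n, exists m, M m /\ `|y - m|_H < d + n.+1%:R^-1.
  move=> n; have ep_gt0 : 0 < n.+1%:R^-1 :> R by rewrite invr_gt0.
  by have [_ [m Mm <-]] := inf_adherent ep_gt0 E_inf; exists m.
have [m ms_m] := complete (almost_nearest_cauchy d_ge0 d_le ms_near).
have Mm : M m by apply: M_closed ms_m => n; case: (ms_near n).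
have dist_m : `|y - m|_H <= d.
  apply/ler_addgt0Pr => e e0; have e2 : 0 < e / 2 by rewrite divr_gt0.
  have [N1 hN1] := ms_m _ e2; have [N2 hN2] := invS_lt e2.
  pose n := maxn N1 N2; have [_ dn] := ms_near n.
  have := hN1 n (leq_maxl _ _); have := hN2 n (leq_maxr _ _).
  have := hnormB_le y (ms n) m; move: dn; move: (n.+1%:R^-1 : R) => a; lra.
exists m => // m' Mm'; apply: min_dist_orth => a.
apply: le_trans dist_m _; rewrite -addrA -opprD [m + _]addrC.
exact: d_le (M_lin a Mm' Mm).
Qed.
End Projection.


Lemma hcvg_cauchy u l : hcvg u l -> hcauchy u.
Proof.
move=> ul e e0; have [N hN] := ul _ (divr_gt0 e0 (ltr0Sn R 1)).
exists N => m n Nm Nn; apply: le_lt_trans (hnormB_le _ l _) _.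
rewrite [`|l - _|_H]hnorm_distC.
by have := hN m Nm; have := hN n Nn; lra.
Qed.

Lemma hcvgD u v l m : hcvg u l -> hcvg v m -> hcvg (fun n => u n + v n) (l + m).
Proof.
move=> ul vm e e0; have e2 : 0 < e / 2 by rewrite divr_gt0.
have [N1 h1] := ul _ e2; have [N2 h2] := vm _ e2.
exists (maxn N1 N2) => n; rewrite geq_max => /andP[n1 n2].
rewrite opprD addrACA; apply: le_lt_trans (hnormD _ _) _.
by have := h1 n n1; have := h2 n n2; lra.
Qed.

Lemma hcvgZ (a : R[i]) u l : hcvg u l -> hcvg (fun n => a *: u n) (a *: l).
Proof.
move=> ul e e0; pose c := Num.sqrt (complex.Re a ^+ 2 + complex.Im a ^+ 2).
have c1 : 0 < c + 1 by rewrite ltr_wpDl ?sqrtr_ge0.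
have [N hN] := ul _ (divr_gt0 e0 c1); exists N => n /hN.
rewrite -scalerBr hnormZ -/c ltr_pdivlMr // => lt_e; apply: le_lt_trans lt_e.
by rewrite mulrC ler_wpM2l ?hnorm_ge0 // lerDl.
Qed.

Lemma Re_ip_cvg_eq a b u v l m : hcvg u l -> hcvg v m ->
  (forall n, complex.Re (ip a (u n)) = complex.Re (ip b (v n))) ->
  complex.Re (ip a l) = complex.Re (ip b m).
Proof.
move=> ul vm euv; apply/eqP; rewrite -subr_eq0 -normr_le0.
apply/ler_addgt0Pr => e e0; have e2 : 0 < e / 2 by rewrite divr_gt0.
have [N1 h1] := Re_ip_cvg a ul e2; have [N2 h2] := Re_ip_cvg b vm e2.
have := h1 _ (leq_maxl N1 N2); have := h2 _ (leq_maxr N1 N2); rewrite euv.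
move: (complex.Re (ip b (v (maxn N1 N2)))) => r h h'.
have := ler_distD r (complex.Re (ip a l)) (complex.Re (ip b m)).
by rewrite [`|complex.Re _ - r|]distrC; lra.
Qed.

Lemma dense_orth_eq0 D u : dense ip D -> (forall d, D d -> ip d u = 0) -> u = 0.
Proof.
move=> D_dense u_orth; apply: hnorm_eq0; apply/eqP; rewrite eq_le hnorm_ge0 andbT.
apply/ler_addgt0Pr => e e0; have [d [Dd ud]] := D_dense u _ e0.
(* [ip d u = 0] turns [sqn u] into [Re (ip (u - d) u)] *)
have : `|u|_H * `|u|_H <= `|u - d|_H * `|u|_H.
  rewrite -expr2 hnorm_sqr -[ip u u]subr0 -(u_orth d Dd) -ipBl.
  exact: le_trans (ler_norm _) (Re_ip_le _ _).
have := hnorm_ge0 u; have := hnorm_ge0 (u - d); move: ud.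
move: (`|u|_H) (`|u - d|_H) => a b; rewrite add0r; nra.
Qed.

Section LinearOn.
Variables (D : H -> Prop) (T : H -> H).
Hypothesis T_lin : linear_on D T.

Lemma lin_dom0 : D 0. Proof. by case: T_lin. Qed.

Lemma lin_map0 : T 0 = 0.
Proof.
case: T_lin => D0 _ TL; have := TL 1 0 0 D0 D0; rewrite !scale1r addr0 => T00.
by apply: (addrI (T 0)); rewrite -T00 addr0.
Qed.

Lemma lin_domZD a x y : D x -> D y -> D (a *: x + y). Proof. by case: T_lin => _ + _; apply. Qed.

Lemma lin_mapZD a x y : D x -> D y -> T (a *: x + y) = a *: T x + T y.
Proof. by case: T_lin => _ _; apply. Qed.

Lemma lin_mapD x y : D x -> D y -> T (x + y) = T x + T y.
Proof. by move=> Dx /(lin_mapZD 1 Dx); rewrite !scale1r. Qed.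

Lemma lin_domZ a x : D x -> D (a *: x).
Proof. by move=> /(lin_domZD a)/(_ lin_dom0); rewrite addr0. Qed.

Lemma lin_mapZ a x : D x -> T (a *: x) = a *: T x.
Proof. by move=> /(lin_mapZD a)/(_ lin_dom0); rewrite !addr0 lin_map0 addr0. Qed.

Lemma lin_domB x y : D x -> D y -> D (x - y).
Proof. by move=> Dx Dy; rewrite -scaleN1r addrC; apply: lin_domZD. Qed.

Lemma lin_mapB x y : D x -> D y -> T (x - y) = T x - T y.
Proof. by move=> Dx Dy; rewrite -scaleN1r addrC lin_mapZD // scaleN1r addrC. Qed.

End LinearOn.

Definition is_resolvent (D : H -> Prop) (T S : H -> H) (lam : R[i]) :=
  [/\ bounded_op ip S,
      (forall y, D (S y) /\ T (S y) - lam *: S y = y) &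
      (forall x, D x -> S (T x - lam *: x) = x)].

Section SelfAdjoint.
Variables (D : H -> Prop) (T : H -> H).
Hypothesis T_sa : self_adjoint ip D T.

Let T_lin : linear_on D T. Proof. by case: T_sa. Qed.
Let T_sym x y : D x -> D y -> ip (T x) y = ip x (T y). Proof. by case: T_sa => _ _ + _; apply. Qed.

Lemma sa_Im_ip x : D x -> complex.Im (ip (T x) x) = 0.
Proof. by move=> Dx; apply: ip_sym_Im; rewrite T_sym // ipC -T_sym // -ipC. Qed.

Lemma sa_graph_closed xs x w : (forall n, D (xs n)) -> hcvg xs x ->
  hcvg (fun n => T (xs n)) w -> D x /\ T x = w.
Proof.
move=> Dxs xs_x Txs_w.
have Re_eq d : D d -> complex.Re (ip (T d) x) = complex.Re (ip d w).
  by move=> Dd; apply: (Re_ip_cvg_eq xs_x Txs_w) => n; rewrite T_sym.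
have ip_eq d : D d -> ip (T d) x = ip d w.
  move=> Dd; apply: complex_eq_Re_iM; first exact: Re_eq.
  by rewrite -!ipZl -(lin_mapZ T_lin) // Re_eq //; apply: (lin_domZ T_lin).
have Dx : D x by case: T_sa => _ _ _; apply; exists w.
split=> //; apply/eqP; rewrite -subr_eq0; apply/eqP.
apply: (dense_orth_eq0 (D := D)); first by case: T_sa.
by move=> d Dd; rewrite ipBr -T_sym // ip_eq // subrr.
Qed.

Section NonReal.
Variable z : R[i].
Hypothesis z_nonreal : complex.Im z != 0.

Local Notation L x := (T x - z *: x).

Lemma shift_linear : linear_on D (fun x => L x).
Proof.
split; [exact: lin_dom0 T_lin | exact: lin_domZD T_lin |] => a x y Dx Dy.
by rewrite (lin_mapZD T_lin) // scalerDr scalerA mulrC -scalerA opprD addrACA -scalerBr.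
Qed.

Lemma Im_ip_shift x : D x -> complex.Im (ip (L x) x) = - (complex.Im z * sqn x).
Proof.
move=> Dx; rewrite ipBl ipZl ipxx raddfB /= sa_Im_ip // sub0r.
by case: z => a b /=; rewrite mulr0 add0r.
Qed.

Lemma shift_lower_bound x : D x -> `|complex.Im z| * `|x|_H <= `|L x|_H.
Proof.
move=> Dx; have [x0|x_neq0] := eqVneq `|x|_H 0; first by rewrite x0 mulr0 hnorm_ge0.
have x_gt0 : 0 < `|x|_H by rewrite lt0r x_neq0 hnorm_ge0.
rewrite -(ler_pM2r x_gt0) -mulrA -expr2 hnorm_sqr -[sqn x]ger0_norm ?sqn_ge0 //.
by rewrite -normrM -normrN -Im_ip_shift // Im_ip_le.
Qed.

Lemma shift_inj x y : D x -> D y -> L x = L y -> x = y.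
Proof.
move=> Dx Dy Lxy; have := shift_lower_bound (lin_domB T_lin Dx Dy).
rewrite (lin_mapB shift_linear) // Lxy subrr hnorm0 pmulr_rle0 ?normr_gt0 //.
by move=> le0; apply/eqP; rewrite -subr_eq0; apply/eqP/hnorm_eq0/le_anti; rewrite le0 hnorm_ge0.
Qed.

Lemma shift_range_closed xs m : (forall n, D (xs n)) -> hcvg (fun n => L (xs n)) m ->
  exists x, D x /\ L x = m.
Proof.
move=> Dxs Lxs_m; have Im_gt0 : 0 < `|complex.Im z| by rewrite normr_gt0.
have xs_cauchy : hcauchy xs.
  move=> e e0; have [N hN] := hcvg_cauchy Lxs_m (mulr_gt0 Im_gt0 e0).
  exists N => p q Np Nq; rewrite -(ltr_pM2l Im_gt0).
  apply: le_lt_trans (shift_lower_bound (lin_domB T_lin (Dxs p) (Dxs q))) _.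
  by rewrite (lin_mapB shift_linear) //; apply: hN.
have [x xs_x] := complete xs_cauchy.
have Txs : hcvg (fun n => T (xs n)) (m + z *: x).
  move=> e /(hcvgD Lxs_m (hcvgZ z xs_x)) [N hN]; exists N => n /hN.
  by rewrite subrK.
have [Dx Tx] := sa_graph_closed Dxs xs_x Txs.
by exists x; rewrite Tx addrK.
Qed.

Lemma orth_shift_range_eq0 v : (forall x, D x -> ip (L x) v = 0) -> v = 0.
Proof.
move=> v_orth; have Dv : D v.
  case: T_sa => _ _ _; apply; exists (z^* *: v) => x Dx.
  by rewrite -[T x](subrK (z *: x)) ipDl v_orth // add0r ipZl ipZr conjCK.
apply: sqn_eq0; have := Im_ip_shift Dv; rewrite v_orth // => /eqP.
by rewrite raddf0 eq_sym oppr_eq0 mulf_eq0 (negbTE z_nonreal) => /eqP.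
Qed.

Lemma resolvent_nonreal : resolvent ip D T z.
Proof.
have L_onto y : exists x, D x /\ L x = y.
  pose M m := exists x, D x /\ L x = m.
  have M0 : M 0 by exists 0; split; [exact: lin_dom0 T_lin | exact: lin_map0 shift_linear].
  have M_lin a m m' : M m -> M m' -> M (a *: m + m').
    move=> [x [Dx <-]] [x' [Dx' <-]]; exists (a *: x + x').
    by split; [exact: (lin_domZD T_lin) | exact: (lin_mapZD shift_linear)].
  have M_closed ms m : (forall n, M (ms n)) -> hcvg ms m -> M m.
    move=> /choice[xs Lxs] ms_m; apply: (@shift_range_closed xs) => [n | e /ms_m[N hN]].
      by case: (Lxs n).
    by exists N => n; have [_ ->] := Lxs n; apply: hN.
  have [_ [x [Dx <-]] orth] := orthogonal_projection M0 M_lin M_closed y.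
  exists x; split=> //; apply/eqP; rewrite eq_sym -subr_eq0; apply/eqP.
  by apply: orth_shift_range_eq0 => x' Dx'; apply: orth; exists x'.
have /choice[S LS] := L_onto.
have DS y : D (S y) by case: (LS y).
have LSK y : L (S y) = y by case: (LS y).
exists S; split=> // [|x Dx]; last by apply: shift_inj => //; rewrite LSK.
split.
  split=> // a y y' _ _; apply: shift_inj => //; first exact: (lin_domZD T_lin).
  by rewrite (lin_mapZD shift_linear) // !LSK.
exists (`|complex.Im z|^-1) => y; rewrite ler_pdivlMl ?normr_gt0 //.
by have := shift_lower_bound (DS y); rewrite LSK.
Qed.

End NonReal.

End SelfAdjoint.

Definition opnorm (S : H -> H) : R :=
  sup [set `|S y|_H | y in [set y | `|y|_H <= 1]]%classic.

Section OperatorNorm.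
Variable S : H -> H.
Hypothesis S_bounded : bounded_op ip S.

Let S_lin : linear_on (fun _ => True) S. Proof. by case: S_bounded. Qed.

Lemma opnorm_has_sup : has_sup [set `|S y|_H | y in [set y | `|y|_H <= 1]]%classic.
Proof.
have [C S_C] := S_bounded.2; split; first by exists `|S 0|_H, 0; rewrite /= ?hnorm0.
exists `|C| => _ [y /= y1 <-]; apply: le_trans (S_C y) _.
apply: le_trans (ler_wpM2r (hnorm_ge0 _) (ler_norm C)) _.
by rewrite -[X in _ <= X]mulr1 ler_wpM2l.
Qed.

Lemma opnormP y : `|S y|_H <= opnorm S * `|y|_H.
Proof.
have [y0|y_neq0] := eqVneq `|y|_H 0.
  by rewrite (hnorm_eq0 y0) (lin_map0 S_lin) hnorm0 mulr0.
have y_gt0 : 0 < `|y|_H by rewrite lt0r y_neq0 hnorm_ge0.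
rewrite -ler_pdivrMr // mulrC -[(`|y|_H)^-1]ger0_norm ?invr_ge0 ?hnorm_ge0 //.
rewrite -hnormZr -(lin_mapZ S_lin) //; apply: sup_upper_bound opnorm_has_sup _ _.
by exists ((`|y|_H)^-1%:C *: y) => //=; rewrite hnormZr ger0_norm ?invr_ge0 ?hnorm_ge0 // mulVf.
Qed.

Lemma opnorm_le (b : R) : 0 <= b -> (forall y, `|S y|_H <= b * `|y|_H) -> opnorm S <= b.
Proof.
move=> b_ge0 S_b; apply: ge_sup; first by exists `|S 0|_H, 0; rewrite /= ?hnorm0.
move=> _ [y /= y1 <-]; apply: le_trans (S_b y) _.
by rewrite -[X in _ <= X]mulr1 ler_wpM2l.
Qed.

End OperatorNorm.

Section SymmetricBounded.
Variables (S : H -> H) (s : R).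
Hypothesis S_lin : linear_on (fun _ => True) S.
Hypothesis S_sym : forall x y, ip (S x) y = ip x (S y).
Hypothesis s_gt0 : 0 < s.
Hypothesis S_s : forall x, `|S x|_H <= s * `|x|_H.

Lemma sqn_sqr_shift_le y :
  sqn (S (S y) - (s ^+ 2)%:C *: y) <= s ^+ 2 * (s ^+ 2 * sqn y - sqn (S y)).
Proof.
have := S_s (S y); rewrite ler_hnorm_sqn ?exprMn ?hnorm_sqr.
  by rewrite sqnB sqnZr Re_ipC ipZl Re_realM -(S_sym y (S y)); lra.
by rewrite mulr_ge0 ?hnorm_ge0 ?ltW.
Qed.

Lemma sharper_bound_of_bounded_below k1 k2 :
  (forall w, `|w|_H <= k1 * `|S w - s%:C *: w|_H) ->
  (forall w, `|w|_H <= k2 * `|S w + s%:C *: w|_H) ->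
  exists2 s', 0 <= s' < s & forall y, `|S y|_H <= s' * `|y|_H.
Proof.
have weaken k w v : `|w|_H <= k * `|v|_H -> `|w|_H <= (`|k| + 1) * `|v|_H.
  by move=> /le_trans; apply; rewrite ler_wpM2r ?hnorm_ge0 // ler_wpDr // ler_norm.
move=> below1 below2; pose k := (`|k1| + 1) * (`|k2| + 1).
have k_gt0 : 0 < k by rewrite mulr_gt0 // ltr_wpDl.
have S_lin_sum x x' : S (x + x') = S x + S x' by apply: (lin_mapD S_lin).
have S_lin_scale (a : R[i]) x : S (a *: x) = a *: S x by apply: (lin_mapZ S_lin).
(* [S^2 - s^2 = (S - s) (S + s)] is bounded below since both factors are *)
have below y : `|y|_H <= k * `|S (S y) - (s ^+ 2)%:C *: y|_H.
  have -> : S (S y) - (s ^+ 2)%:C *: y = S (S y + s%:C *: y) - s%:C *: (S y + s%:C *: y).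
    rewrite S_lin_sum S_lin_scale scalerDr scalerA -rmorphM -expr2.
    by rewrite opprD addrA addrK.
  apply: le_trans (weaken _ _ _ (below2 y)) _; rewrite /k -mulrA mulrCA ler_wpM2l ?addr_ge0 //.
  exact: weaken.
have ks_gt0 : 0 < k ^+ 2 * s ^+ 2 by rewrite mulr_gt0 ?exprn_gt0.
pose d := Num.min (k ^+ 2 * s ^+ 2)^-1 (s ^+ 2).
have d_gt0 : 0 < d by rewrite lt_min invr_gt0 ks_gt0 exprn_gt0.
have gap y : sqn (S y) <= (s ^+ 2 - d) * sqn y.
  have d_le : d <= (k ^+ 2 * s ^+ 2)^-1 by rewrite ge_min lexx.
  rewrite mulrBl lerBrDr; apply: (le_trans (y := sqn (S y) + (k ^+ 2 * s ^+ 2)^-1 * sqn y)).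
    by rewrite lerD2l ler_wpM2r ?sqn_ge0.
  rewrite addrC -lerBrDr ler_pdivrMl // -mulrA.
  have := below y; rewrite ler_hnorm_sqn; last by rewrite mulr_ge0 ?hnorm_ge0 ?ltW.
  rewrite exprMn hnorm_sqr => /le_trans; apply.
  by rewrite ler_wpM2l ?sqr_ge0 //; apply: sqn_sqr_shift_le.
have sd_ge0 : 0 <= s ^+ 2 - d by rewrite subr_ge0 ge_min lexx orbT.
exists (Num.sqrt (s ^+ 2 - d)) => [|y].
  by rewrite sqrtr_ge0 -ltr_sqr ?nnegrE ?sqrtr_ge0 ?ltW // sqr_sqrtr // gtrBl.
rewrite ler_hnorm_sqn ?mulr_ge0 ?sqrtr_ge0 ?hnorm_ge0 //.
by rewrite exprMn sqr_sqrtr // hnorm_sqr gap.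
Qed.

End SymmetricBounded.

Section RealResolvent.
Variables (D : H -> Prop) (T S : H -> H) (c : R).
Hypothesis T_sym : forall x y, D x -> D y -> ip (T x) y = ip x (T y).
Hypothesis S_res : is_resolvent D T S c%:C.

Let S_bounded : bounded_op ip S. Proof. by case: S_res. Qed.
Let S_lin : linear_on (fun _ => True) S. Proof. by case: S_bounded. Qed.
Let S_dom y : D (S y). Proof. by case: S_res => _ + _; case/(_ y). Qed.
Let S_right y : T (S y) - c%:C *: S y = y. Proof. by case: S_res => _ + _; case/(_ y). Qed.

Lemma resolvent_sym y y' : ip (S y) y' = ip y (S y').
Proof.
rewrite -{1}(S_right y') -{2}(S_right y) ipBr ipBl ipZl ipZr_real.
by rewrite T_sym //; apply: S_dom.
Qed.

Lemma resolvent_shift_bounded_below mu : mu != 0 -> resolvent ip D T (c + mu)%:C ->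
  exists k, forall w, `|w|_H <= k * `|S w - mu^-1%:C *: w|_H.
Proof.
move=> mu_neq0 [S' [[_ [C S'_C]] _ S'_left]].
exists (`|mu| * (C * `|mu| + 1)) => w; set v := S w - mu^-1%:C *: w.
have Sw : S w = S' (- (mu%:C *: v)).
  rewrite -[S w in LHS]S'_left // rmorphD scalerDl opprD addrA S_right /v.
  by rewrite scalerBr scalerA -rmorphM mulfV // rmorph1 scale1r opprB.
have Sw_le : `|S w|_H <= C * `|mu| * `|v|_H.
  by rewrite Sw -mulrA -hnormZr -(hnormN (_ *: v)); apply: S'_C.
have -> : w = mu%:C *: (S w - v).
  by rewrite /v opprB addrC subrK scalerA -rmorphM mulfV // rmorph1 scale1r.
rewrite hnormZr -mulrA ler_wpM2l //; apply: le_trans (hnormD _ _) _.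
by rewrite hnormN mulrDl mul1r lerD2r.
Qed.

Lemma resolvent_norm_le (e : R) : 0 < e ->
  (forall lam, `|lam| < e -> resolvent ip D T (c + lam)%:C) ->
  forall y, `|S y|_H <= e^-1 * `|y|_H.
Proof.
move=> e_gt0 res_near.
suff s_le : opnorm S <= e^-1.
  by move=> y; apply: le_trans (opnormP S_bounded y) _; rewrite ler_wpM2r ?hnorm_ge0.
rewrite leNgt; apply/negP; set s := opnorm S => lt_s.
have s_gt0 : 0 < s by apply: lt_trans lt_s; rewrite invr_gt0.
have s_inv : `|s^-1| < e by rewrite gtr0_norm ?invr_gt0 // -[e]invrK ltf_pV2 ?posrE ?invr_gt0.
have s_neq0 : s != 0 by rewrite gt_eqF.
have [k1 below1] := resolvent_shift_bounded_below (invr_neq0 s_neq0) (res_near _ s_inv).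
have ns_neq0 : - s^-1 != 0 by rewrite oppr_eq0 invr_eq0.
have ns_inv : `|- s^-1| < e by rewrite normrN.
have [k2 below2] := resolvent_shift_bounded_below ns_neq0 (res_near _ ns_inv).
have [s' /andP[s'_ge0 s's] S_s'] : exists2 s', 0 <= s' < s & forall y, `|S y|_H <= s' * `|y|_H.
  apply: (sharper_bound_of_bounded_below S_lin resolvent_sym s_gt0 (opnormP S_bounded)
           (k1 := k1) (k2 := k2)).
    by move=> w; have := below1 w; rewrite invrK.
  by move=> w; have := below2 w; rewrite invrN invrK rmorphN scaleNr opprK.
by have := opnorm_le s'_ge0 S_s'; rewrite leNgt s's.
Qed.

End RealResolvent.

Lemma self_adjoint_perturb D (A B : H -> H) (t : R) :
  self_adjoint ip D A -> self_adjoint ip (fun _ => True) B ->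
  self_adjoint ip D (fun v => A v + t%:C *: B v).
Proof.
move=> [A_lin D_dense A_sym A_adj] [B_lin _ B_sym _]; split=> //.
- split; [exact: lin_dom0 A_lin | exact: lin_domZD A_lin |] => a x y Dx Dy.
  rewrite (lin_mapZD A_lin) // (lin_mapZD B_lin) // scalerDr !scalerA mulrC.
  by rewrite -scalerA addrACA -scalerDr.
- by move=> x y Dx Dy; rewrite ipDl ipDr ipZl ipZr_real A_sym // B_sym.
- move=> y [w Aw]; apply: A_adj; exists (w - t%:C *: B y) => x Dx.
  by rewrite ipBr ipZr_real -B_sym // -ipZl -Aw // ipDl addrK.
Qed.

Section NonnegativeOperator.
Variables (B : H -> H) (CB : R).
Hypothesis B_lin : linear_on (fun _ => True) B.
Hypothesis B_sym : forall x y, ip (B x) y = ip x (B y).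
Hypothesis B_bound : forall x, `|B x|_H <= CB * `|x|_H.
Hypothesis B_pos : forall x, 0 <= ip (B x) x.

Lemma Re_ip_nonneg x : 0 <= complex.Re (ip (B x) x).
Proof. by have := B_pos x; rewrite lecE => /andP[]. Qed.

Lemma nonneg_nonzero_pos : (exists x, B x <> 0) -> exists v, 0 < complex.Re (ip (B v) v).
Proof.
move=> [x Bx_neq0]; have [|Bxx0] := boolP (0 < complex.Re (ip (B x) x)); first by exists x.
have {}Bxx0 : complex.Re (ip (B x) x) = 0 by apply/eqP; rewrite eq_le Re_ip_nonneg andbT leNgt.
(* along [x + B x] the form picks up [2 `|B x|^2 > 0] *)
exists (x + B x); rewrite (lin_mapD B_lin) // ipDl !ipDr !raddfD /= Bxx0 (B_sym (B x) x).
have : 0 < sqn (B x) by rewrite lt0r sqn_ge0 andbT; apply/eqP => /sqn_eq0.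
have := Re_ip_nonneg (B x); lra.
Qed.

Lemma Re_ip_quad_lipschitz v w :
  complex.Re (ip (B v) v) - complex.Re (ip (B w) w) <= CB * `|v - w|_H * (`|v|_H + `|w|_H).
Proof.
have -> : complex.Re (ip (B v) v) - complex.Re (ip (B w) w)
    = complex.Re (ip (B (v - w)) v) + complex.Re (ip w (B (v - w))).
  by rewrite -B_sym (lin_mapB B_lin) // ipBl ipBr !raddfB; ring.
rewrite mulrDr; apply: lerD.
  apply: le_trans (ler_norm _) _; apply: le_trans (Re_ip_le _ _) _.
  by rewrite ler_wpM2r ?hnorm_ge0.
apply: le_trans (ler_norm _) _; apply: le_trans (Re_ip_le _ _) _.
by rewrite mulrC ler_wpM2r ?hnorm_ge0.
Qed.

Lemma quad_pos_dense D : dense ip D -> (exists v, 0 < complex.Re (ip (B v) v)) ->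
  exists2 w, D w & 0 < complex.Re (ip (B w) w).
Proof.
move=> D_dense [v Bvv_gt0]; set beta := complex.Re (ip (B v) v) in Bvv_gt0.
pose k := `|CB| * (2 * `|v|_H + 1) + 1.
have k_gt0 : 0 < k by rewrite ltr_wpDl ?mulr_ge0 ?addr_ge0 ?mulr_ge0 ?hnorm_ge0.
have delta_gt0 : 0 < Num.min 1 (beta / k) by rewrite lt_min ltr01 divr_gt0.
have [w [Dw vw]] := D_dense v _ delta_gt0.
exists w => //; rewrite lt_min ltr_pdivlMr // in vw; case/andP: vw => vw1 vwk.
have w_le : `|w|_H <= `|v|_H + 1.
  by have := hnormB_le w v 0; rewrite !subr0 hnorm_distC; lra.
have := Re_ip_quad_lipschitz v w; rewrite -/beta.
have : CB * `|v - w|_H * (`|v|_H + `|w|_H) <= `|v - w|_H * k.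
  apply: le_trans (ler_norm _) _; rewrite !normrM (ger0_norm (hnorm_ge0 _)).
  rewrite (ger0_norm (addr_ge0 (hnorm_ge0 v) (hnorm_ge0 w))).
  rewrite mulrAC [_ * k]mulrC ler_wpM2r ?hnorm_ge0 // /k -[X in X <= _]addr0 lerD //.
  by rewrite ler_wpM2l //; lra.
lra.
Qed.

End NonnegativeOperator.

Section UniformResolvent.
Variables (D : H -> Prop) (A B : H -> H) (CB c K : R) (Sf : R -> H -> H).
Hypothesis A_sa : self_adjoint ip D A.
Hypothesis B_sa : self_adjoint ip (fun _ => True) B.
Hypothesis CB_ge0 : 0 <= CB.
Hypothesis B_bound : forall x, `|B x|_H <= CB * `|x|_H.
Hypothesis B_pos : forall x, 0 <= ip (B x) x.
Hypothesis K_ge0 : 0 <= K.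
Hypothesis Sf_res : forall t, is_resolvent D (fun v => A v + t%:C *: B v) (Sf t) c%:C.
Hypothesis Sf_bound : forall t y, `|Sf t y|_H <= K * `|y|_H.

Let B_lin : linear_on (fun _ => True) B. Proof. by case: B_sa. Qed.
Let B_sym x y : ip (B x) y = ip x (B y). Proof. by case: B_sa => _ _ + _; apply. Qed.
Let Sf_lin t : linear_on (fun _ => True) (Sf t). Proof. by case: (Sf_res t) => -[]. Qed.

Let Sf_sym t y y' : ip (Sf t y) y' = ip y (Sf t y').
Proof.
have [_ _ T_sym _] := self_adjoint_perturb t A_sa B_sa.
exact: resolvent_sym T_sym (Sf_res t) y y'.
Qed.

Lemma resolvent_identity a b y : Sf a y - Sf b y = (b - a)%:C *: Sf a (B (Sf b y)).
Proof.
have [_ Sb_right _] := Sf_res b; have [_ _ Sa_left] := Sf_res a.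
have [Dv v_right] := Sb_right y; set v := Sf b y in Dv v_right *.
have : A v + a%:C *: B v - c%:C *: v = y - (b - a)%:C *: B v.
  rewrite -v_right rmorphB scalerBl opprB [RHS]addrAC -[_ + b%:C *: B v + _]addrA.
  by rewrite [b%:C *: B v + _]addrC subrK.
move=> /(congr1 (Sf a)); rewrite Sa_left // (lin_mapB (Sf_lin a)) // (lin_mapZ (Sf_lin a)) //.
by move=> Sv; rewrite {1}Sv subKr.
Qed.

Variable u : H.
Hypothesis Du : D u.

Local Notation g t := (complex.Re (ip (Sf t (B u)) (B u))).

Lemma resolvent_form_step a b : a <= b ->
  g b <= g a + CB ^+ 2 * K ^+ 3 * `|B u|_H ^+ 2 * (b - a) ^+ 2.
Proof.
move=> ab; have ba_ge0 : 0 <= b - a by rewrite subr_ge0.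
set va := Sf a (B u); set vb := Sf b (B u).
have Bvb : `|B vb|_H <= CB * (K * `|B u|_H).
  exact: le_trans (B_bound _) (ler_wpM2l CB_ge0 (Sf_bound _ _)).
have va_vb : `|va - vb|_H <= (b - a) * (K * (CB * (K * `|B u|_H))).
  rewrite resolvent_identity hnormZr ger0_norm // ler_wpM2l //.
  exact: le_trans (Sf_bound _ _) (ler_wpM2l K_ge0 Bvb).
have g_diff : g a - g b = (b - a) * complex.Re (ip (B vb) va).
  have -> : g a - g b = complex.Re (ip (va - vb) (B u)) by rewrite ipBl raddfB.
  by rewrite resolvent_identity ipZl Re_realM Sf_sym B_sym.
have Bvb_va : - ((b - a) * (CB ^+ 2 * K ^+ 3 * `|B u|_H ^+ 2)) <= complex.Re (ip (B vb) va).
  rewrite -[va](subrK vb) ipDr raddfD /= -[X in X <= _]addr0 lerD ?Re_ip_nonneg //.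
  apply: lerNnormlW; apply: le_trans (Re_ip_le _ _) _.
  have -> : (b - a) * (CB ^+ 2 * K ^+ 3 * `|B u|_H ^+ 2)
          = CB * (K * `|B u|_H) * ((b - a) * (K * (CB * (K * `|B u|_H)))) by ring.
  exact: ler_pM (hnorm_ge0 _) (hnorm_ge0 _) Bvb va_vb.
have := ler_wpM2l ba_ge0 Bvb_va; rewrite -g_diff; lra.
Qed.

Lemma resolvent_form_asymptotic t :
  `|t| * `|t * g t - complex.Re (ip (B u) u)| <=
  `|A u - c%:C *: u|_H * (`|u|_H + K * `|A u - c%:C *: u|_H).
Proof.
set w := A u - c%:C *: u; set v := Sf t (B u).
have [_ _ S_left] := Sf_res t.
(* [Sf t] inverts [A + t B - c], and [(A + t B - c) u = w + t B u] *)
have tv : t%:C *: v = u - Sf t w.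
  have := S_left u Du; rewrite addrAC (lin_mapD (Sf_lin t)) // (lin_mapZ (Sf_lin t)) //.
  by move=> <-; rewrite -/w addrC addKr.
have -> : t * g t - complex.Re (ip (B u) u) = - complex.Re (ip w v).
  by rewrite -Re_realM -ipZl tv ipBl raddfB /= Sf_sym (Re_ipC u); ring.
rewrite normrN; apply: le_trans (ler_wpM2l (normr_ge0 t) (Re_ip_le _ _)) _.
rewrite mulrCA ler_wpM2l ?hnorm_ge0 // -hnormZr tv.
by apply: le_trans (hnormB_le _ 0 _) _; rewrite subr0 sub0r hnormN lerD2l Sf_bound.
Qed.

Lemma uniform_resolvent_form_le0 : complex.Re (ip (B u) u) <= 0.
Proof.
apply: nonincreasing_asymptotic_le0 resolvent_form_asymptotic.
exact: nonincreasing_of_sqr_step resolvent_form_step.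
Qed.

End UniformResolvent.

Section Perturbation.
Variables (D : H -> Prop) (A B : H -> H).
Hypothesis A_sa : self_adjoint ip D A.
Hypothesis B_bounded : bounded_op ip B.
Hypothesis B_sa : self_adjoint ip (fun _ => True) B.
Hypothesis B_pos : forall x, 0 <= ip (B x) x.

Local Notation Sigma z := (exists t : R, spectrum ip D (fun v => A v + t%:C *: B v) z).

Lemma perturbed_spectrum_real z : Sigma z -> complex.Im z = 0.
Proof.
move=> [t not_res]; apply/eqP; apply: contrapT => /negP Im_z; apply: not_res.
exact (resolvent_nonreal (self_adjoint_perturb t A_sa B_sa) Im_z).
Qed.

Lemma perturbed_spectra_dense : (exists x, B x <> 0) ->
  forall x e : R, 0 < e -> exists mu : R, Sigma mu%:C /\ `|mu - x| < e.
Proof.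
move=> B_neq0 x e e_gt0; apply: contrapT => no_mu.
have res_near t lam : `|lam| < e -> resolvent ip D (fun v => A v + t%:C *: B v) (x + lam)%:C.
  move=> lam_lt; apply: contrapT => not_res; apply: no_mu.
  by exists (x + lam); split; [exists t | rewrite addrC addKr].
have /choice[Sf Sf_res] t : exists S, is_resolvent D (fun v => A v + t%:C *: B v) S x%:C.
  by have := res_near t 0; rewrite addr0 normr0; apply.
have Sf_bound t y : `|Sf t y|_H <= e^-1 * `|y|_H.
  have [_ _ T_sym _] := self_adjoint_perturb t A_sa B_sa.
  exact (resolvent_norm_le T_sym (Sf_res t) e_gt0 (res_near t) y).
have [B_lin _ B_sym_on _] := B_sa.
have B_sym y y' : ip (B y) y' = ip y (B y') by apply: B_sym_on.
have [_ [CB B_CB]] := B_bounded.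
have B_absCB y : `|B y|_H <= `|CB| * `|y|_H.
  by apply: le_trans (B_CB y) _; rewrite ler_wpM2r ?hnorm_ge0 ?ler_norm.
have [v Bv_pos] := nonneg_nonzero_pos B_lin B_sym B_pos B_neq0.
have [_ D_dense _ _] := A_sa.
have [u Du Bu_pos] := quad_pos_dense B_lin B_sym B_absCB D_dense (ex_intro _ v Bv_pos).
have einv_ge0 : 0 <= e^-1 by rewrite invr_ge0 ltW.
have := uniform_resolvent_form_le0 A_sa B_sa (normr_ge0 CB) B_absCB B_pos
  einv_ge0 Sf_res Sf_bound Du.
by rewrite leNgt Bu_pos.
Qed.

End Perturbation.

End Hilbert.

Theorem corollary2p6 (R : realType) (H : lmodType R[i]) (ip : H -> H -> R[i])
  (hH : is_hilbert ip)
  (DA : H -> Prop) (A : H -> H) (B : H -> H)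
  (hA : self_adjoint ip DA A)
  (hBb : bounded_op ip B)
  (hBs : self_adjoint ip (fun _ => True) B)
  (hBpos : forall x, 0 <= ip (B x) x)
  (hB0 : exists x, B x <> 0) :
  let Sigma := fun z : R[i] =>
    exists t : R, spectrum ip DA (fun v => A v + t%:C *: B v) z in
  (forall z, Sigma z -> complex.Im z = 0) /\
  (forall (x e : R), 0 < e -> exists mu : R, Sigma mu%:C /\ `|mu - x| < e).
Proof.
move=> Sigma; have [ipl ipC ipge0 ipdef complete] := hH; split.
  exact (perturbed_spectrum_real ipl ipC ipge0 ipdef complete hA hBs).
exact (perturbed_spectra_dense ipl ipC ipge0 ipdef hA hBb hBs hBpos hB0).
Qed.
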